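(* For $n\ge2$, within the set of CPS tensors in $\mathbb{C}^{n\times n\times n\times n}$: $\mathbb{C}\vec S^{n^2\times n^2}_+$ is a proper subset of $CPS^{n^4}_+$ and a proper subset of $HPSD^{4,n}_+$; furthermore $CPS^{n^4}_+\not\subset HPSD^{4,n}_+$ and $HPSD^{4,n}_+\not\subset CPS^{n^4}_+$.
   Context: A tensor $\mathcal{A}\in\mathbb{C}^{n\times n\times n\times n}$ is conjugate partial-symmetric (CPS) if $\mathcal{A}_{ijkl}=\overline{\mathcal{A}_{klij}}$ and $\mathcal{A}_{ijkl}=\mathcal{A}_{jikl}=\mathcal{A}_{ijlk}$ for all indices. Write $\langle X,\mathcal{A}X\rangle=\sum_{i,j,k,l}\mathcal{A}_{ijkl}X_{kl}\overline{X_{ij}}$. For a CPS $\mathcal{A}$: $\mathcal{A}\in CPS^{n^4}_+$ (PSD) iff $\sum_{ijkl}\mathcal{A}_{ijkl}x_ix_j\bar x_k\bar x_l\ge0$ for all $x\in\mathbb{C}^n$; $\mathcal{A}\in\mathbb{C}\vec S^{n^2\times n^2}_+$ (matrix PSD) iff $\langle X,\mathcal{A}X\rangle\ge0$ for all complex symmetric $X\in\mathbb{C}^{n\times n}$ ($X=X^T$); $\mathcal{A}\in HPSD^{4,n}_+$ (general PSD) iff $\langle X,\mathcal{A}X\rangle\ge0$ for all Hermitian positive semidefinite $X\in\mathbb{C}^{n\times n}$. *)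

From HB Require Import structures.
From mathcomp Require Import all_boot all_order all_algebra.
From mathcomp Require Import reals.
From mathcomp.real_closed Require Import complex.
Set Implicit Arguments. Unset Strict Implicit. Unset Printing Implicit Defensive.
Import Order.TTheory GRing.Theory Num.Theory.
Local Open Scope ring_scope.

(* The complex numbers are modelled as R[i] = complex R for R : realType
   (the real numbers); R[i] is a numClosedFieldType, where the order is
   "z <= w iff w - z is a nonnegative real" and conj is Num.conj. *)

Definition tensor4 (C : Type) (n : nat) := 'I_n -> 'I_n -> 'I_n -> 'I_n -> C.

Section Defs.
Variable R : realType.
Local Notation C := (R[i]).
Variable n : nat.

Definition CPS (A : tensor4 C n) : Prop :=
  forall i j k l,
    A i j k l = Num.conj (A k l i j) /\ A i j k l = A j i k l /\ A i j k l = A i j l k.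

Definition tinner (A : tensor4 C n) (X : 'M[C]_n) : C :=
  \sum_(i < n) \sum_(j < n) \sum_(k < n) \sum_(l < n)
     A i j k l * X k l * Num.conj (X i j).

Definition CPS_psd (A : tensor4 C n) : Prop :=
  CPS A /\ forall x : 'I_n -> C,
    0 <= \sum_(i < n) \sum_(j < n) \sum_(k < n) \sum_(l < n)
           A i j k l * x i * x j * Num.conj (x k) * Num.conj (x l).

Definition CPS_matrix_psd (A : tensor4 C n) : Prop :=
  CPS A /\ forall X : 'M[C]_n, X^T = X -> 0 <= tinner A X.

Definition hermitian_psd (X : 'M[C]_n) : Prop :=
  (forall i j, X j i = Num.conj (X i j)) /\
  forall v : 'I_n -> C,
    0 <= \sum_(i < n) \sum_(j < n) Num.conj (v i) * X i j * v j.

Definition CPS_general_psd (A : tensor4 C n) : Prop :=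
  CPS A /\ forall X : 'M[C]_n, hermitian_psd X -> 0 <= tinner A X.

End Defs.

From HB Require Import structures.
From mathcomp Require Import all_boot all_order all_algebra.
From mathcomp Require Import reals.
From mathcomp.real_closed Require Import complex.
From mathcomp Require Import ring.
Set Implicit Arguments. Unset Strict Implicit. Unset Printing Implicit Defensive.
Import Order.TTheory GRing.Theory Num.Theory.
Local Open Scope ring_scope.

(* For a complex vector x, the symmetric matrix X = conj(x) conj(x)^T
   turns <X, A X> into the quartic form of A, so matrix-PSD implies PSD.  For a
   Hermitian X, the matrix X + X^T is symmetric and the partial symmetries of A
   give <X + X^T, A (X + X^T)> = 4 <X, A X>, so matrix-PSD implies general-PSD.
   Two tensors supported on the coordinates {0, 1} separate the remaining classes:
   [twist_tensor] has quartic form |a b* - a* b|^2 + 2 |a b|^2 >= 0 but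
   <D, A D> = -2 for D = diag(1, 1, 0, ...); [coupling_tensor] has
   <X, A X> = 2 X00 X11 >= 0 on Hermitian PSD X but quartic form -2 at (1, i).
   Since each of them lies outside matrix-PSD, both inclusions are strict. *)

Section Sum4.
Variables (V : nmodType) (n : nat).

Definition sum4 (F : 'I_n -> 'I_n -> 'I_n -> 'I_n -> V) : V :=
  \sum_(i < n) \sum_(j < n) \sum_(k < n) \sum_(l < n) F i j k l.

Lemma eq_sum4 (F G : 'I_n -> 'I_n -> 'I_n -> 'I_n -> V) :
  (forall i j k l, F i j k l = G i j k l) -> sum4 F = sum4 G.
Proof.
move=> FG; apply: eq_bigr => i _; apply: eq_bigr => j _.
by apply: eq_bigr => k _; apply: eq_bigr => l _.
Qed.

Lemma sum4D (F G : 'I_n -> 'I_n -> 'I_n -> 'I_n -> V) :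
  sum4 (fun i j k l => F i j k l + G i j k l) = sum4 F + sum4 G.
Proof.
rewrite /sum4 -big_split; apply: eq_bigr => i _; rewrite -big_split.
by apply: eq_bigr => j _; rewrite -big_split; apply: eq_bigr => k _; rewrite -big_split.
Qed.

Lemma sum4_swap12 (F : 'I_n -> 'I_n -> 'I_n -> 'I_n -> V) :
  sum4 (fun i j k l => F j i k l) = sum4 F.
Proof. exact: exchange_big. Qed.

Lemma sum4_swap34 (F : 'I_n -> 'I_n -> 'I_n -> 'I_n -> V) :
  sum4 (fun i j k l => F i j l k) = sum4 F.
Proof. by apply: eq_bigr => i _; apply: eq_bigr => j _; apply: exchange_big. Qed.

End Sum4.

Section Inclusions.
Variables (R : realType) (n : nat).
Local Notation C := R[i].

Lemma CPS_matrix_psd_psd (A : tensor4 C n) : CPS_matrix_psd A -> CPS_psd A.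
Proof.
case=> cpsA matA; split=> // x.
pose X := \matrix_(k, l) ((x k)^* * (x l)^*).
have symX : X^T = X by apply/matrixP => k l; rewrite !mxE mulrC.
rewrite [leRHS](_ : _ = tinner A X); first exact: matA.
by apply: eq_sum4 => i j k l; rewrite !mxE rmorphM /= !conjCK; ring.
Qed.

Lemma tinner_symmetrize (A : tensor4 C n) (X : 'M[C]_n) :
  CPS A -> tinner A (X + X^T) = 4 * tinner A X.
Proof.
move=> cpsA; pose T i j k l := A i j k l * X k l * (X i j)^*.
rewrite [LHS](@eq_sum4 _ _ _
  (fun i j k l => (T i j k l + T i j l k) + (T j i k l + T j i l k))); last first.
  move=> i j k l; rewrite /T !mxE rmorphD /=.
  have [_ [Aji Alk]] := cpsA i j k l; have [_ [_ Alk']] := cpsA j i k l.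
  rewrite -Alk' -Aji -Alk; ring.
rewrite !sum4D (sum4_swap12 (fun i j k l => T i j l k)) (sum4_swap34 T) (sum4_swap12 T).
rewrite /tinner -/(sum4 T); ring.
Qed.

Lemma CPS_matrix_psd_general_psd (A : tensor4 C n) :
  CPS_matrix_psd A -> CPS_general_psd A.
Proof.
case=> cpsA matA; split=> // X _.
have symY : (X + X^T)^T = X + X^T by apply/matrixP => i j; rewrite !mxE addrC.
by have := matA _ symY; rewrite tinner_symmetrize // pmulr_rge0 // ltr0n.
Qed.

Lemma hermitian_psd_diag_ge0 (X : 'M[C]_n) (i : 'I_n) :
  hermitian_psd X -> 0 <= X i i.
Proof.
case=> _ /(_ (fun j => (j == i)%:R)).
have delta (F : 'I_n -> C) : \sum_(j < n) (j == i)%:R * F j = F i.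
  rewrite (bigD1 i) //= eqxx mul1r big1 ?addr0 // => j /negbTE ->.
  by rewrite mul0r.
rewrite (eq_bigr (fun k => (k == i)%:R * X k i)) ?delta // => k _.
rewrite (eq_bigr (fun j => (j == i)%:R * ((k == i)%:R * X k j))) ?delta // => j _.
by rewrite conjC_nat mulrC.
Qed.

End Inclusions.

Section SupportOnTwoCoordinates.
Variables (n : nat) (i0 i1 : 'I_n).
Hypotheses (i0E : i0 = 0%N :> nat) (i1E : i1 = 1%N :> nat).

Lemma sum_supp01 (V : nmodType) (F : 'I_n -> V) :
  (forall i : 'I_n, (1 < i)%N -> F i = 0) ->
  \sum_(i < n) F i = \sum_(i <- [:: i0; i1]) F i.
Proof.
move=> F0; rewrite big_cons big_seq1 (bigD1 i0) //= (bigD1 i1) /=; last first.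
  by rewrite -val_eqE /= i0E i1E.
rewrite big1 ?addr0 // => -[[|[|m]] lt_m] //=; rewrite -!val_eqE /= ?i0E ?i1E //.
by move=> _; apply: F0.
Qed.

Lemma sum4_supp01 (V : nmodType) (F : 'I_n -> 'I_n -> 'I_n -> 'I_n -> V) :
  (forall i j k l : 'I_n, [|| 1 < i, 1 < j, 1 < k | 1 < l]%N -> F i j k l = 0) ->
  sum4 F = \sum_(i <- [:: i0; i1]) \sum_(j <- [:: i0; i1])
             \sum_(k <- [:: i0; i1]) \sum_(l <- [:: i0; i1]) F i j k l.
Proof.
move=> F0; rewrite /sum4 sum_supp01 => [|i lt_i]; last first.
  by do 3!apply: big1 => ? _; apply: F0; rewrite lt_i.
apply: eq_bigr => i _; rewrite sum_supp01 => [|j lt_j]; last first.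
  by do 2!apply: big1 => ? _; apply: F0; rewrite lt_j orbT.
apply: eq_bigr => j _; rewrite sum_supp01 => [|k lt_k]; last first.
  by apply: big1 => ? _; apply: F0; rewrite lt_k !orbT.
by apply: eq_bigr => k _; rewrite sum_supp01 // => l lt_l; apply: F0; rewrite lt_l !orbT.
Qed.

End SupportOnTwoCoordinates.

Section Counterexamples.
Variable R : realType.
Local Notation C := R[i].

(* Entries are indexed by nat so that case analysis on the support computes. *)
Definition coupling_entry (i j k l : nat) : C :=
  match i, j, k, l with
  | O, O, S O, S O | S O, S O, O, O => 1
  | _, _, _, _ => 0
  end.

Definition twist_entry (i j k l : nat) : C :=
  match i, j, k, l with
  | O, O, S O, S O | S O, S O, O, O => -1
  | O, S O, O, S O | O, S O, S O, O | S O, O, O, S O | S O, O, S O, O => 1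
  | _, _, _, _ => 0
  end.

Definition coupling_tensor n : tensor4 C n := fun i j k l => coupling_entry i j k l.
Definition twist_tensor n : tensor4 C n := fun i j k l => twist_entry i j k l.
Arguments coupling_tensor : clear implicits.
Arguments twist_tensor : clear implicits.

Lemma coupling_entry_eq0 (i j k l : nat) :
  [|| 1 < i, 1 < j, 1 < k | 1 < l]%N -> coupling_entry i j k l = 0.
Proof. by case: i => [|[|?]]; case: j => [|[|?]]; case: k => [|[|?]]; case: l => [|[|?]]. Qed.

Lemma twist_entry_eq0 (i j k l : nat) :
  [|| 1 < i, 1 < j, 1 < k | 1 < l]%N -> twist_entry i j k l = 0.
Proof. by case: i => [|[|?]]; case: j => [|[|?]]; case: k => [|[|?]]; case: l => [|[|?]]. Qed.

Lemma coupling_entry_CPS (i j k l : nat) :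
  [/\ coupling_entry i j k l = (coupling_entry k l i j)^*,
      coupling_entry i j k l = coupling_entry j i k l &
      coupling_entry i j k l = coupling_entry i j l k].
Proof.
by case: i => [|[|?]]; case: j => [|[|?]]; case: k => [|[|?]]; case: l => [|[|?]];
  rewrite /= ?(rmorph0, rmorph1).
Qed.

Lemma twist_entry_CPS (i j k l : nat) :
  [/\ twist_entry i j k l = (twist_entry k l i j)^*,
      twist_entry i j k l = twist_entry j i k l &
      twist_entry i j k l = twist_entry i j l k].
Proof.
by case: i => [|[|?]]; case: j => [|[|?]]; case: k => [|[|?]]; case: l => [|[|?]];
  rewrite /= ?(rmorph0, rmorph1, rmorphN1).
Qed.

Lemma CPS_coupling_tensor n : CPS (coupling_tensor n).
Proof. by move=> i j k l; have [] := coupling_entry_CPS i j k l. Qed.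

Lemma CPS_twist_tensor n : CPS (twist_tensor n).
Proof. by move=> i j k l; have [] := twist_entry_CPS i j k l. Qed.

Definition diag01 n : 'M[C]_n := \matrix_(k, l) ((k == l :> nat) && (k < 2)%N)%:R.
Arguments diag01 : clear implicits.

Lemma diag01_eq0 n (i j : 'I_n) : (1 < i)%N || (1 < j)%N -> diag01 n i j = 0.
Proof.
by rewrite mxE; case: eqVneq => [/val_inj ->|] //=; rewrite orbb [(j < 2)%N]ltnNge => ->.
Qed.

Variables (n : nat) (i0 i1 : 'I_n).
Hypotheses (i0E : i0 = 0%N :> nat) (i1E : i1 = 1%N :> nat).

Lemma hermitian_psd_diag01 : hermitian_psd (diag01 n).
Proof.
split=> [i j|v].
  by rewrite !mxE conjC_nat; case: (eqVneq (val i) (val j)) => [->|/negPf ne];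
    rewrite ?eqxx // eq_sym ne.
rewrite (sum_supp01 i0E i1E) => [|i lt_i]; last first.
  by apply: big1 => j _; rewrite diag01_eq0 ?lt_i // mulr0 mul0r.
rewrite !big_cons !big_nil !addr0.
rewrite !(sum_supp01 i0E i1E (F := fun j => _ * diag01 n _ j * v j));
  try by move=> j lt_j; rewrite diag01_eq0 ?lt_j ?orbT // mulr0 mul0r.
rewrite !big_cons !big_nil !mxE i0E i1E /= !(mulr1, mulr0, mul0r, addr0, add0r).
by rewrite addr_ge0 // mulrC mul_conjC_ge0.
Qed.

Lemma twist_tensor_psd : CPS_psd (twist_tensor n).
Proof.
split=> [|x]; first exact: CPS_twist_tensor.
rewrite -/(sum4 _) (sum4_supp01 i0E i1E) => [|i j k l lt]; last first.
  by rewrite /twist_tensor twist_entry_eq0 // !mul0r.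
rewrite !big_cons !big_nil /twist_tensor i0E i1E /=.
set a := x i0; set b := x i1.
rewrite [leRHS](_ : _ = (a * b^* - a^* * b) * (a * b^* - a^* * b)^*
                        + 2 * ((a * b^*) * (a * b^*)^*)).
  by rewrite addr_ge0 ?mul_conjC_ge0 // mulr_ge0 ?mul_conjC_ge0.
by rewrite !(rmorphB, rmorphM) /= !conjCK; ring.
Qed.

Lemma twist_tensor_not_general_psd : ~ CPS_general_psd (twist_tensor n).
Proof.
case=> _ /(_ _ hermitian_psd_diag01).
rewrite /tinner -/(sum4 _) (sum4_supp01 i0E i1E) => [|i j k l lt]; last first.
  by rewrite /twist_tensor twist_entry_eq0 // !mul0r.
rewrite !big_cons !big_nil /twist_tensor !mxE i0E i1E /=.
rewrite !(rmorph1, rmorph0, mulr1, mulr0, mul0r, mul1r, addr0, add0r).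
by rewrite -opprD oppr_ge0 lt_geF // addr_gt0 ?ltr01.
Qed.

Lemma coupling_tensor_general_psd : CPS_general_psd (coupling_tensor n).
Proof.
split=> [|X psdX]; first exact: CPS_coupling_tensor.
have X00 := hermitian_psd_diag_ge0 i0 psdX; have X11 := hermitian_psd_diag_ge0 i1 psdX.
rewrite /tinner -/(sum4 _) (sum4_supp01 i0E i1E) => [|i j k l lt]; last first.
  by rewrite /coupling_tensor coupling_entry_eq0 // !mul0r.
rewrite !big_cons !big_nil /coupling_tensor i0E i1E /=.
rewrite !(mulr1, mulr0, mul0r, mul1r, addr0, add0r) !geC0_conj //.
by rewrite addr_ge0 ?mulr_ge0.
Qed.

Lemma coupling_tensor_not_psd : ~ CPS_psd (coupling_tensor n).
Proof.
case=> _ /(_ (fun i => if i == 0%N :> nat then 1 else if i == 1%N :> nat then 'i else 0)).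
rewrite -/(sum4 _) (sum4_supp01 i0E i1E) => [|i j k l lt]; last first.
  by rewrite /coupling_tensor coupling_entry_eq0 // !mul0r.
rewrite !big_cons !big_nil /coupling_tensor i0E i1E /=.
rewrite !(rmorph1, mulr1, mulr0, mul0r, mul1r, addr0, add0r).
rewrite conjCi mulrNN -expr2 sqrCi.
by rewrite -opprD oppr_ge0 lt_geF // addr_gt0 ?ltr01.
Qed.

End Counterexamples.

Arguments coupling_tensor {R} n.
Arguments twist_tensor {R} n.

Theorem mainTheorem20 (R : realType) (n : nat) (hn : (2 <= n)%N) :
  ((forall A : tensor4 R[i] n, CPS_matrix_psd A -> CPS_psd A) /\
   (exists A : tensor4 R[i] n, CPS_psd A /\ ~ CPS_matrix_psd A)) /\
  ((forall A : tensor4 R[i] n, CPS_matrix_psd A -> CPS_general_psd A) /\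
   (exists A : tensor4 R[i] n, CPS_general_psd A /\ ~ CPS_matrix_psd A)) /\
  (exists A : tensor4 R[i] n, CPS_psd A /\ ~ CPS_general_psd A) /\
  (exists A : tensor4 R[i] n, CPS_general_psd A /\ ~ CPS_psd A).
Proof.
pose i0 : 'I_n := Ordinal (ltnW hn); pose i1 : 'I_n := Ordinal hn.
have twist_psd := @twist_tensor_psd R n i0 i1 erefl erefl.
have twist_not := @twist_tensor_not_general_psd R n i0 i1 erefl erefl.
have coupling_gen := @coupling_tensor_general_psd R n i0 i1 erefl erefl.
have coupling_not := @coupling_tensor_not_psd R n i0 i1 erefl erefl.
have incl_psd := @CPS_matrix_psd_psd R n.
have incl_gen := @CPS_matrix_psd_general_psd R n.
split; [split; [exact: incl_psd|] | split; [split; [exact: incl_gen|] | split]].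
- by exists (twist_tensor n); split; last move/incl_gen.
- by exists (coupling_tensor n); split; last move/incl_psd.
- by exists (twist_tensor n).
- by exists (coupling_tensor n).
Qed.
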